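(* Let $A\subseteq(0,1)$ be non-empty. The following are equivalent: (1) $A=f^{-1}\{0\}$ for some computable $f:[0,1]\to\mathbb R$ with $f(0)\cdot f(1)<0$; (2) $A=B\cup\{x\}$ for some $B\subseteq(0,1)$ that is co-c.e. closed in $[0,1]$ and some computable point $x\in(0,1)$; (3) $A$ is co-c.e. closed in $[0,1]$ and contains a computable point $x\in(0,1)$.
   Context: A set $B\subseteq[0,1]$ is co-c.e. closed in $[0,1]$ if it is closed and there is a computable enumeration of rational open intervals (open in $[0,1]$) whose union is $[0,1]\setminus B$. Computable real numbers and computable functions $f:[0,1]\to\mathbb R$ are meant in the usual sense of computable analysis. *)

From Stdlib Require Import Reals Lra List.
From Stdlib Require Export Rtopology.
Import ListNotations.
Open Scope R_scope.

Inductive code : Type :=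
| cZero : code
| cSucc : code
| cProj : nat -> code
| cComp : code -> list code -> code
| cPrec : code -> code -> code
| cMin  : code -> code.

Inductive eval : code -> list nat -> nat -> Prop :=
| ev_zero : forall v, eval cZero v 0
| ev_succ : forall v, eval cSucc v (S (hd 0%nat v))
| ev_proj : forall i v, eval (cProj i) v (nth i v 0%nat)
| ev_comp : forall f gs v ws y,
    evals gs v ws -> eval f ws y -> eval (cComp f gs) v y
| ev_prec0 : forall f g v y, eval f v y -> eval (cPrec f g) (0%nat :: v) y
| ev_precS : forall f g n v r y,
    eval (cPrec f g) (n :: v) r -> eval g (n :: r :: v) y ->
    eval (cPrec f g) (S n :: v) y
| ev_min : forall f v n,
    eval f (n :: v) 0%nat ->
    (forall m, (m < n)%nat -> exists k, eval f (m :: v) (S k)) ->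
    eval (cMin f) v n
with evals : list code -> list nat -> list nat -> Prop :=
| evs_nil : forall v, evals [] v []
| evs_cons : forall g gs v y ys,
    eval g v y -> evals gs v ys -> evals (g :: gs) v (y :: ys).

Definition comp1 (g : nat -> nat) : Prop :=
  exists c, forall a, eval c [a] (g a).
Definition comp4 (g : nat -> nat -> nat -> nat -> nat) : Prop :=
  exists c, forall a b d e, eval c [a; b; d; e] (g a b d e).

Definition QR (p q d : nat) : R := (INR p - INR q) / (INR d + 1).

Definition computable_real (x : R) : Prop :=
  exists p q d : nat -> nat, comp1 p /\ comp1 q /\ comp1 d /\
    forall n, Rabs (QR (p n) (q n) (d n) - x) <= (/2) ^ n.

(* B is co-c.e. closed in [0,1]: B subset of [0,1], closed, and [0,1]\B is the
   union of a computable enumeration of rational intervals (a_n,b_n) /\ [0,1]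
   (which are exactly the rational open intervals open in [0,1]; empty ones
   allowed when a_n >= b_n). *)
Definition co_ce_closed (B : R -> Prop) : Prop :=
  (forall x, B x -> 0 <= x <= 1) /\ closed_set B /\
  exists a1 a2 a3 b1 b2 b3 : nat -> nat,
    comp1 a1 /\ comp1 a2 /\ comp1 a3 /\ comp1 b1 /\ comp1 b2 /\ comp1 b3 /\
    forall x, 0 <= x <= 1 ->
      (~ B x <-> exists n, QR (a1 n) (a2 n) (a3 n) < x < QR (b1 n) (b2 n) (b3 n)).

(* computable f : [0,1] -> R (Grzegorczyk/Ko characterisation): a computable
   modulus of uniform continuity on [0,1] together with a computable map giving
   2^-n approximations of f at rational points of [0,1]. Values outside [0,1]
   are irrelevant. *)
Definition computable_fun (f : R -> R) : Prop :=
  (exists m : nat -> nat, comp1 m /\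
     forall n x y, 0 <= x <= 1 -> 0 <= y <= 1 -> Rabs (x - y) <= (/2) ^ (m n) ->
       Rabs (f x - f y) <= (/2) ^ n) /\
  (exists g1 g2 g3 : nat -> nat -> nat -> nat -> nat,
     comp4 g1 /\ comp4 g2 /\ comp4 g3 /\
     forall p q d n, 0 <= QR p q d <= 1 ->
       Rabs (QR (g1 p q d n) (g2 p q d n) (g3 p q d n) - f (QR p q d)) <= (/2) ^ n).

From Stdlib Require Import Reals.
Open Scope R_scope.
From Stdlib Require Import Lra Lia List Arith ZArith Classical ClassicalEpsilon
  FunctionalExtensionality PropExtensionality.
Import ListNotations.

(* (3) -> (2) is immediate (B = A).  For (1) -> (3), two facts about a
   computable f: its zero set is co-c.e. closed, since a point y is outside it
   iff some rational approximation of f at a grid point near y certifies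
   |f| > 0 on a neighbourhood (given by the modulus) containing y; and if f
   changes sign it has a computable zero, either a rational one or the limit
   of an effective bisection, where the sign of f at each midpoint is decided
   by searching for such a certificate.  For (2) -> (1), the tents h_k of an
   enumeration (a_k, b_k) of the complement of B are 1-Lipschitz and positive
   exactly on (a_k, b_k), so g = sum 2^-k h_k vanishes exactly on B and
   f y = (y - x) g y works; its values at rational points are approximated
   with integer arithmetic only.

   Computability is witnessed by codes of mu-recursive functions, which we
   obtain by compiling a small expression language. *)

Open Scope nat_scope.

Fixpoint cconst (k : nat) : code :=
  match k with 0 => cZero | S k => cComp cSucc [cconst k] end.

Lemma ev_const k v : eval (cconst k) v k.
Proof.
  induction k as [|k IH]; simpl; [constructor|].
  econstructor; [econstructor; [exact IH|constructor]|].
  change (S k) with (S (hd 0 [k])). constructor.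
Qed.

Lemma ev_proj_eq i v y : nth i v 0 = y -> eval (cProj i) v y.
Proof. intros <-. constructor. Qed.

Lemma ev_comp2 F a b v x y z :
  eval F [x; y] z -> eval a v x -> eval b v y -> eval (cComp F [a; b]) v z.
Proof. intros. econstructor; [|eauto]. repeat (constructor; auto). Qed.

Lemma ev_comp1 F a v x y : eval F [x] y -> eval a v x -> eval (cComp F [a]) v y.
Proof. intros. econstructor; [|eauto]. repeat (constructor; auto). Qed.

Definition ADD := cPrec (cProj 0) (cComp cSucc [cProj 1]).
Lemma ev_ADD n y : eval ADD [n; y] (n + y).
Proof.
  induction n as [|n IH]; simpl; [constructor; now apply ev_proj_eq|].
  eapply ev_precS; [exact IH|]. eapply ev_comp1; [|now apply ev_proj_eq].
  change (S (n + y)) with (S (hd 0 [n + y])). constructor.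
Qed.

Definition MUL := cPrec cZero (cComp ADD [cProj 1; cProj 2]).
Lemma ev_MUL n y : eval MUL [n; y] (n * y).
Proof.
  induction n as [|n IH]; simpl; [constructor; constructor|].
  eapply ev_precS; [exact IH|].
  eapply ev_comp2; [|now apply ev_proj_eq..].
  replace (y + n * y) with (n * y + y) by lia. apply ev_ADD.
Qed.

Definition PRED := cPrec cZero (cProj 0).
Lemma ev_PRED n : eval PRED [n] (Nat.pred n).
Proof.
  induction n as [|n IH]; simpl; [constructor; constructor|].
  eapply ev_precS; [exact IH|]. now apply ev_proj_eq.
Qed.

(* Reversed truncated subtraction: SUBR [n; x] = x - n. *)
Definition SUBR := cPrec (cProj 0) (cComp PRED [cProj 1]).
Lemma ev_SUBR n x : eval SUBR [n; x] (x - n).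
Proof.
  induction n as [|n IH]; simpl; [constructor; apply ev_proj_eq; simpl; lia|].
  eapply ev_precS; [exact IH|]. eapply ev_comp1; [|now apply ev_proj_eq].
  replace (x - S n) with (Nat.pred (x - n)) by lia. apply ev_PRED.
Qed.

(* Reversed exponentiation: POW [n; x] = x ^ n. *)
Definition POW := cPrec (cconst 1) (cComp MUL [cProj 1; cProj 2]).
Lemma ev_POW n x : eval POW [n; x] (x ^ n).
Proof.
  induction n as [|n IH]; simpl; [constructor; apply ev_const|].
  eapply ev_precS; [exact IH|]. eapply ev_comp2; [|now apply ev_proj_eq..].
  rewrite Nat.mul_comm. apply ev_MUL.
Qed.

(* Division: x / y is the least q with x + 1 - (q + 1) * y = 0, for y > 0. *)
Definition DIV_TEST :=
  cComp SUBR [cComp MUL [cComp ADD [cProj 0; cconst 1]; cProj 2];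
              cComp ADD [cProj 1; cconst 1]].
Definition DIV := cMin DIV_TEST.

Lemma ev_DIV_TEST q x y : eval DIV_TEST [q; x; y] (x + 1 - (q + 1) * y).
Proof.
  eapply ev_comp2; [apply ev_SUBR| |].
  - eapply ev_comp2; [apply ev_MUL| |now apply ev_proj_eq].
    eapply ev_comp2; [apply ev_ADD|now apply ev_proj_eq|apply ev_const].
  - eapply ev_comp2; [apply ev_ADD|now apply ev_proj_eq|apply ev_const].
Qed.

Lemma ev_DIV x y : 0 < y -> eval DIV [x; y] (x / y).
Proof.
  intros Hy. pose proof (Nat.div_mod x y ltac:(lia)).
  pose proof (Nat.mod_upper_bound x y ltac:(lia)). constructor.
  - replace 0 with (x + 1 - (x / y + 1) * y) by nia. apply ev_DIV_TEST.
  - intros m Hm. exists (x - (m + 1) * y).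
    replace (S (x - (m + 1) * y)) with (x + 1 - (m + 1) * y) by nia.
    apply ev_DIV_TEST.
Qed.

(* The least zero of a function nat -> nat (chosen classically; 0 if none). *)
Definition mu (t : nat -> nat) : nat :=
  match excluded_middle_informative
          (exists n, t n = 0 /\ forall m, m < n -> t m <> 0) with
  | left H => proj1_sig (constructive_indefinite_description _ H)
  | right _ => 0
  end.

Lemma mu_spec t : (exists n, t n = 0) ->
  t (mu t) = 0 /\ forall m, m < mu t -> t m <> 0.
Proof.
  intros [n Hn].
  assert (Hleast : exists n, t n = 0 /\ forall m, m < n -> t m <> 0).
  { revert Hn. induction n as [n IH] using (well_founded_induction lt_wf). intros Hn.
    destruct (classic (exists m, m < n /\ t m = 0)) as [[m [Hm Htm]]|Hnone].
    - exact (IH m Hm Htm).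
    - exists n. split; auto. intros m Hm Htm. apply Hnone. eauto. }
  unfold mu. destruct excluded_middle_informative as [H|H]; [|contradiction].
  destruct constructive_indefinite_description as [m Hm]. exact Hm.
Qed.

(* An expression language over an environment v : list nat.  [EMu ar t] and
   [ERec ar b s e] see only the first [ar] entries of the environment as
   parameters; [EX1]/[EX4] call a function f together with a code c for it. *)
Inductive expr : Type :=
| EV (i : nat) | EC (k : nat)
| EAdd (a b : expr) | ESub (a b : expr) | EMul (a b : expr)
| EPow (a b : expr) | EDiv (a b : expr)
| EMu (ar : nat) (t : expr)
| ERec (ar : nat) (b s e : expr)
| EX1 (c : code) (f : nat -> nat) (a : expr)
| EX4 (c : code) (f : nat -> nat -> nat -> nat -> nat) (a b d e : expr).

Definition params (ar : nat) (v : list nat) := map (fun i => nth i v 0) (seq 0 ar).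

Fixpoint prim_rec (b : nat) (s : nat -> nat -> nat) (n : nat) : nat :=
  match n with 0 => b | S j => s j (prim_rec b s j) end.

Fixpoint value (E : expr) (v : list nat) : nat :=
  match E with
  | EV i => nth i v 0 | EC k => k
  | EAdd a b => value a v + value b v | ESub a b => value a v - value b v
  | EMul a b => value a v * value b v | EPow a b => value a v ^ value b v
  | EDiv a b => value a v / value b v
  | EMu ar t => mu (fun n => value t (n :: params ar v))
  | ERec ar b s e => prim_rec (value b (params ar v))
                       (fun j r => value s (j :: r :: params ar v)) (value e v)
  | EX1 c f a => f (value a v)
  | EX4 c f a b d e => f (value a v) (value b v) (value d v) (value e v)
  end.

Fixpoint defined (E : expr) (v : list nat) : Prop :=
  match E with
  | EV _ | EC _ => True
  | EAdd a b | ESub a b | EMul a b | EPow a b => defined a v /\ defined b v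
  | EDiv a b => defined a v /\ defined b v /\ 0 < value b v
  | EMu ar t => (exists n, value t (n :: params ar v) = 0) /\
                forall n, defined t (n :: params ar v)
  | ERec ar b s e => defined b (params ar v) /\
      (forall j, j < value e v ->
         defined s (j :: prim_rec (value b (params ar v))
                            (fun j r => value s (j :: r :: params ar v)) j
                     :: params ar v)) /\ defined e v
  | EX1 c f a => (forall x, eval c [x] (f x)) /\ defined a v
  | EX4 c f a b d e => (forall x y z w, eval c [x; y; z; w] (f x y z w)) /\
      defined a v /\ defined b v /\ defined d v /\ defined e v
  end.

Definition projs ar := map cProj (seq 0 ar).

Fixpoint compile (E : expr) : code :=
  match E with
  | EV i => cProj i | EC k => cconst k
  | EAdd a b => cComp ADD [compile a; compile b]
  | ESub a b => cComp SUBR [compile b; compile a]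
  | EMul a b => cComp MUL [compile a; compile b]
  | EPow a b => cComp POW [compile b; compile a]
  | EDiv a b => cComp DIV [compile a; compile b]
  | EMu ar t => cComp (cMin (compile t)) (projs ar)
  | ERec ar b s e => cComp (cPrec (compile b) (compile s)) (compile e :: projs ar)
  | EX1 c f a => cComp c [compile a]
  | EX4 c f a b d e => cComp c [compile a; compile b; compile d; compile e]
  end.

Lemma evals_projs ar v : evals (projs ar) v (params ar v).
Proof.
  unfold projs, params. induction (seq 0 ar); simpl; constructor; auto. constructor.
Qed.

Lemma compile_correct E : forall v, defined E v -> eval (compile E) v (value E v).
Proof.
  induction E; simpl; intros v W.
  - constructor.
  - apply ev_const.
  - destruct W. eapply ev_comp2; eauto using ev_ADD.
  - destruct W. eapply ev_comp2; eauto using ev_SUBR.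
  - destruct W. eapply ev_comp2; eauto using ev_MUL.
  - destruct W. eapply ev_comp2; eauto using ev_POW.
  - destruct W as [? [? ?]]. eapply ev_comp2; eauto using ev_DIV.
  - destruct W as [Hex Hdef]. econstructor; [apply evals_projs|].
    destruct (mu_spec _ Hex) as [Hzero Hpos]. constructor.
    + rewrite <- Hzero. apply IHE, Hdef.
    + intros m Hm. exists (Nat.pred (value E (m :: params ar v))).
      specialize (Hpos m Hm).
      replace (S (Nat.pred (value E (m :: params ar v))))
        with (value E (m :: params ar v)) by lia.
      apply IHE, Hdef.
  - destruct W as [Wb [Ws We]].
    econstructor; [constructor; [apply IHE3, We|apply evals_projs]|].
    assert (Hrec : forall n, n <= value E3 v ->
      eval (cPrec (compile E1) (compile E2)) (n :: params ar v)
        (prim_rec (value E1 (params ar v))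
           (fun j r => value E2 (j :: r :: params ar v)) n)).
    { induction n as [|n IHn]; simpl; intros Hn.
      - constructor. apply IHE1, Wb.
      - econstructor; [apply IHn; lia|]. apply IHE2, Ws. lia. }
    apply Hrec. lia.
  - destruct W. eapply ev_comp1; eauto.
  - destruct W as [? [? [? [? ?]]]]. econstructor; [|eauto]. repeat (constructor; auto).
Qed.

Lemma comp1_expr E : (forall a, defined E [a]) -> comp1 (fun a => value E [a]).
Proof. intros H. exists (compile E). intros a. apply compile_correct, H. Qed.

Lemma comp4_expr E : (forall a b d e, defined E [a; b; d; e]) ->
  comp4 (fun a b d e => value E [a; b; d; e]).
Proof. intros H. exists (compile E). intros. apply compile_correct, H. Qed.

Lemma comp1_code f : comp1 f -> { c | forall a, eval c [a] (f a) }.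
Proof. apply constructive_indefinite_description. Qed.

Lemma comp4_code f : comp4 f -> { c | forall a b d e, eval c [a; b; d; e] (f a b d e) }.
Proof. apply constructive_indefinite_description. Qed.

Open Scope R_scope.

Ltac rabs := unfold Rabs in *; repeat match goal with
  | |- context [Rcase_abs ?x] => destruct (Rcase_abs x)
  | H : context [Rcase_abs ?x] |- _ => destruct (Rcase_abs x) end; try lra.

Lemma npow2_pos n : (0 < 2 ^ n)%nat.
Proof. induction n; simpl; lia. Qed.

Lemma INR_pow2 n : INR (2 ^ n) = 2 ^ n.
Proof. rewrite pow_INR. reflexivity. Qed.

Lemma pow2_pos n : 0 < 2 ^ n.
Proof. apply pow_lt; lra. Qed.

Lemma half_pos n : 0 < (/2) ^ n.
Proof. apply pow_lt; lra. Qed.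

Lemma half_inv n : (/2) ^ n = / 2 ^ n.
Proof. apply pow_inv. Qed.

Lemma half_mul n : (/2) ^ n * 2 ^ n = 1.
Proof. rewrite half_inv. apply Rinv_l, Rgt_not_eq, pow2_pos. Qed.

Lemma half_add a b : (/2) ^ (a + b) = (/2) ^ a * (/2) ^ b.
Proof. apply pow_add. Qed.

Lemma half_plus2 k : (/2) ^ (k + 2) = (/2) ^ k / 4.
Proof. rewrite half_add. simpl. field. Qed.

Lemma half_small eps : 0 < eps -> exists N, (/2) ^ N < eps.
Proof.
  intros He. destruct (pow_lt_1_zero (/2) ltac:(rewrite Rabs_pos_eq; lra) eps He) as [N HN].
  exists N. specialize (HN N (le_n _)). rewrite Rabs_pos_eq in HN; auto. left; apply half_pos.
Qed.

Lemma le_eps a b c : (forall N, a <= b + c * (/2) ^ N) -> a <= b.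
Proof.
  intros H. destruct (Rle_dec a b) as [|Hab]; auto. exfalso.
  pose proof (Rabs_pos c).
  assert (Hq : 0 < (a - b) / (Rabs c + 1)) by (apply Rdiv_lt_0_compat; lra).
  destruct (half_small _ Hq) as [N HN]. specialize (H N). pose proof (half_pos N).
  assert (c * (/2) ^ N <= Rabs c * (/2) ^ N) by (apply Rmult_le_compat_r; [lra|apply Rle_abs]).
  apply Rmult_lt_compat_r with (r := Rabs c + 1) in HN; [|lra].
  unfold Rdiv in HN. rewrite Rmult_assoc, Rinv_l in HN by lra. lra.
Qed.

Lemma zero_eps a : (forall N, Rabs a <= (/2) ^ N) -> a = 0.
Proof.
  intros H. assert (Rabs a <= 0) by (apply (le_eps _ _ 1); intros N; specialize (H N); lra).
  destruct (Req_dec a 0); auto. pose proof (Rabs_pos_lt a). lra.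
Qed.

Lemma lim_le (u : nat -> R) l c K :
  Un_cv u l -> (forall n, (K <= n)%nat -> u n <= c) -> l <= c.
Proof.
  intros Hc Hu. destruct (Rle_dec l c); auto. exfalso.
  destruct (Hc (l - c) ltac:(lra)) as [N HN]. specialize (HN (Nat.max N K) ltac:(lia)).
  specialize (Hu (Nat.max N K) ltac:(lia)). unfold R_dist in HN. rabs.
Qed.

Lemma INR_pm1 n : (0 < n)%nat -> INR (n - 1) + 1 = INR n.
Proof. intros H. rewrite minus_INR by lia. simpl. lra. Qed.

Lemma INR_sub a b : INR (a - b) = Rmax 0 (INR a - INR b).
Proof.
  destruct (le_lt_dec b a) as [L|L].
  - rewrite minus_INR; auto. apply le_INR in L. unfold Rmax; destruct Rle_dec; lra.
  - replace (a - b)%nat with 0%nat by lia. apply lt_INR in L.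
    unfold Rmax; destruct Rle_dec; simpl; lra.
Qed.

Lemma INR_div N Y : (0 < Y)%nat -> INR (N / Y) <= INR N / INR Y < INR (N / Y) + 1.
Proof.
  intros HY. pose proof (Nat.div_mod N Y ltac:(lia)) as E.
  pose proof (Nat.mod_upper_bound N Y ltac:(lia)) as Hlt.
  assert (HY' : 0 < INR Y) by (apply lt_0_INR; lia).
  assert (E' : INR N = INR Y * INR (N / Y) + INR (N mod Y))
    by (rewrite E at 1; rewrite plus_INR, mult_INR; reflexivity).
  apply lt_INR in Hlt. pose proof (pos_INR (N mod Y)).
  split; [apply Rmult_le_reg_r with (INR Y)|apply Rmult_lt_reg_r with (INR Y)]; auto;
    unfold Rdiv; rewrite Rmult_assoc, Rinv_l; lra.
Qed.

Lemma QR_neg p q d : QR q p d = - QR p q d.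
Proof. unfold QR. field. pose proof (pos_INR d). lra. Qed.

Lemma QR_nat i W : (0 < W)%nat -> QR i 0 (W - 1) = INR i / INR W.
Proof. intros. unfold QR. rewrite INR_pm1 by auto. simpl. f_equal. lra. Qed.

Lemma QR_dyadic i j : QR i 0 (2 ^ j - 1) = INR i / 2 ^ j.
Proof. rewrite QR_nat by apply npow2_pos. now rewrite INR_pow2. Qed.

Lemma ratio_unit i W : (i <= W)%nat -> (0 < W)%nat -> 0 <= INR i / INR W <= 1.
Proof.
  intros Hi HW. apply le_INR in Hi. apply lt_INR in HW. simpl in HW. pose proof (pos_INR i).
  split; [apply Rmult_le_pos; [lra|left; apply Rinv_0_lt_compat; lra]|].
  apply Rmult_le_reg_r with (INR W); auto. unfold Rdiv. rewrite Rmult_assoc, Rinv_l; lra.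
Qed.

Lemma floor_ex y (W : nat) : 0 <= y <= 1 -> (0 < W)%nat ->
  exists i : nat, (i <= W)%nat /\ INR i <= y * INR W < INR i + 1.
Proof.
  intros Hy HW. set (z := y * INR W).
  assert (Hz : 0 <= z <= INR W) by (unfold z; pose proof (pos_INR W); split; nra).
  destruct (archimed z) as [A1 A2].
  assert (Hu : (1 <= up z)%Z) by (assert (0 < IZR (up z)) as Hp by lra; apply lt_0_IZR in Hp; lia).
  exists (Z.to_nat (up z - 1)).
  assert (E : INR (Z.to_nat (up z - 1)) = IZR (up z) - 1)
    by (rewrite INR_IZR_INZ, Z2Nat.id, minus_IZR by lia; reflexivity).
  rewrite E. split; [|lra]. apply INR_le. rewrite E. lra.
Qed.

Lemma grid_dist i W y : (0 < W)%nat -> Rabs (INR i - y * INR W) < 1 ->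
  Rabs (INR i / INR W - y) <= / INR W.
Proof.
  intros HW H. apply lt_INR in HW. simpl in HW.
  replace (INR i / INR W - y) with ((INR i - y * INR W) / INR W) by (field; lra).
  unfold Rdiv. rewrite Rabs_mult, Rabs_inv, (Rabs_pos_eq (INR W)) by lra.
  rewrite <- (Rmult_1_l (/ INR W)) at 2.
  apply Rmult_le_compat_r; [left; apply Rinv_0_lt_compat|]; lra.
Qed.

Lemma Rmin_lip a b c d e :
  Rabs (a - c) <= e -> Rabs (b - d) <= e -> Rabs (Rmin a b - Rmin c d) <= e.
Proof. intros. unfold Rmin. repeat destruct Rle_dec; rabs. Qed.

Lemma Rmax_lip a b c d e :
  Rabs (a - c) <= e -> Rabs (b - d) <= e -> Rabs (Rmax a b - Rmax c d) <= e.
Proof. intros. unfold Rmax. repeat destruct Rle_dec; rabs. Qed.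

Definition modulus (f : R -> R) (m : nat -> nat) : Prop :=
  forall n x y, 0 <= x <= 1 -> 0 <= y <= 1 -> Rabs (x - y) <= (/2) ^ (m n) ->
    Rabs (f x - f y) <= (/2) ^ n.

(* [exceeds a b d N] is 0 exactly when the rational QR a b d exceeds 2^-N:
   an arithmetical (hence computable) form of that comparison. *)
Definition exceeds (a b d N : nat) : nat := (d + 2 - (a - b) * 2 ^ N)%nat.

Lemma exceeds_spec a b d N : exceeds a b d N = 0%nat <-> (/2) ^ N < QR a b d.
Proof.
  unfold exceeds, QR. pose proof (pos_INR d) as Hd. pose proof (pow2_pos N) as HN.
  assert (E : (/2) ^ N < (INR a - INR b) / (INR d + 1) <->
              INR d + 1 < (INR a - INR b) * 2 ^ N).
  { rewrite half_inv.
    assert (Ec : forall x, x / (INR d + 1) * ((INR d + 1) * 2 ^ N) = x * 2 ^ N)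
      by (intros; field; lra).
    assert (Eh : / 2 ^ N * ((INR d + 1) * 2 ^ N) = INR d + 1) by (field; lra).
    split; intros H.
    - apply Rmult_lt_compat_r with (r := (INR d + 1) * 2 ^ N) in H; [|nra].
      rewrite Ec, Eh in H. exact H.
    - apply Rmult_lt_reg_r with ((INR d + 1) * 2 ^ N); [nra|]. rewrite Ec, Eh. exact H. }
  rewrite E. destruct (le_lt_dec a b) as [L|L].
  - replace (a - b)%nat with 0%nat by lia. apply le_INR in L. split; intros; [lia|nra].
  - rewrite <- INR_pow2, <- (minus_INR a b), <- mult_INR by lia.
    change 1 with (INR 1). rewrite <- plus_INR.
    split; intros H; [apply lt_INR|apply INR_lt in H]; lia.
Qed.

Lemma QR_nonneg a b d : (b <= a)%nat -> 0 <= QR a b d.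
Proof.
  intros L. apply le_INR in L. pose proof (pos_INR d).
  apply Rmult_le_pos; [|left; apply Rinv_0_lt_compat]; lra.
Qed.

Lemma QR_neg_lt a b d : (a < b)%nat -> QR a b d < 0.
Proof.
  intros L. rewrite <- (Ropp_involutive (QR a b d)), <- QR_neg.
  apply lt_INR in L. pose proof (pos_INR d).
  enough (0 < QR b a d) by lra. apply Rdiv_lt_0_compat; lra.
Qed.

Lemma exceeds_neg_spec a b d N : exceeds b a d N = 0%nat <-> QR a b d < - (/2) ^ N.
Proof. rewrite exceeds_spec, QR_neg. lra. Qed.

Section Certificates.

Variables (f : R -> R) (g1 g2 g3 : nat -> nat -> nat -> nat -> nat).
Hypothesis Happ : forall p q d n, 0 <= QR p q d <= 1 ->
  Rabs (QR (g1 p q d n) (g2 p q d n) (g3 p q d n) - f (QR p q d)) <= (/2) ^ n.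

(* [certify p q d N] is 0 iff the 2^-(N+2)-approximation of f at QR p q d
   exceeds 2^-N in absolute value; [neg_bit] is 1 iff that approximation is
   negative. *)
Definition certify p q d N : nat :=
  (exceeds (g1 p q d (N + 2)) (g2 p q d (N + 2)) (g3 p q d (N + 2)) N *
   exceeds (g2 p q d (N + 2)) (g1 p q d (N + 2)) (g3 p q d (N + 2)) N)%nat.

Definition neg_bit p q d N : nat := (1 - (g1 p q d (N + 2) + 1 - g2 p q d (N + 2)))%nat.

Lemma certify_spec p q d N : certify p q d N = 0%nat <->
  (/2) ^ N < Rabs (QR (g1 p q d (N + 2)) (g2 p q d (N + 2)) (g3 p q d (N + 2))).
Proof.
  unfold certify. rewrite Nat.eq_mul_0, exceeds_spec, exceeds_neg_spec.
  pose proof (half_pos N) as Hh. split; [intros [H|H]|intros H]; rabs.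
Qed.

Lemma certify_complete p q d N : 0 <= QR p q d <= 1 ->
  2 * (/2) ^ N <= Rabs (f (QR p q d)) -> certify p q d N = 0%nat.
Proof.
  intros Hr Hf. apply certify_spec. pose proof (Happ p q d (N + 2) Hr) as Ha.
  rewrite half_plus2 in Ha. pose proof (half_pos N). rabs.
Qed.

Lemma certify_exists p q d : 0 <= QR p q d <= 1 -> f (QR p q d) <> 0 ->
  exists N, certify p q d N = 0%nat.
Proof.
  intros Hr Hf. assert (Hpos : 0 < Rabs (f (QR p q d)) / 2) by (pose proof (Rabs_pos_lt _ Hf); lra).
  destruct (half_small _ Hpos) as [N HN]. exists N. apply certify_complete; auto. lra.
Qed.

Lemma certify_abs p q d N : 0 <= QR p q d <= 1 -> certify p q d N = 0%nat ->
  (/2) ^ N / 2 < Rabs (f (QR p q d)).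
Proof.
  intros Hr Hc. apply certify_spec in Hc. pose proof (Happ p q d (N + 2) Hr) as Ha.
  rewrite half_plus2 in Ha. pose proof (half_pos N). rabs.
Qed.

Lemma certify_sign p q d N : 0 <= QR p q d <= 1 -> certify p q d N = 0%nat ->
  (neg_bit p q d N = 1%nat /\ f (QR p q d) < 0) \/
  (neg_bit p q d N = 0%nat /\ 0 < f (QR p q d)).
Proof.
  intros Hr Hc. apply certify_spec in Hc. pose proof (Happ p q d (N + 2) Hr) as Ha.
  rewrite half_plus2 in Ha. pose proof (half_pos N). unfold neg_bit.
  destruct (Nat.ltb_spec (g1 p q d (N + 2)) (g2 p q d (N + 2))) as [L|L];
    [left; pose proof (QR_neg_lt _ _ (g3 p q d (N + 2)) L)
    |right; pose proof (QR_nonneg _ _ (g3 p q d (N + 2)) L)]; (split; [lia|rabs]).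
Qed.

Variables c1 c2 c3 : code.
Hypothesis Hc1 : forall a b d e, eval c1 [a; b; d; e] (g1 a b d e).
Hypothesis Hc2 : forall a b d e, eval c2 [a; b; d; e] (g2 a b d e).
Hypothesis Hc3 : forall a b d e, eval c3 [a; b; d; e] (g3 a b d e).

Definition EExceeds (a b d N : expr) : expr :=
  ESub (EAdd d (EC 2)) (EMul (ESub a b) (EPow (EC 2) N)).

Definition ECertify (P Q D N : expr) : expr :=
  let G c g := EX4 c g P Q D (EAdd N (EC 2)) in
  EMul (EExceeds (G c1 g1) (G c2 g2) (G c3 g3) N)
       (EExceeds (G c2 g2) (G c1 g1) (G c3 g3) N).

Definition ENegBit (P Q D N : expr) : expr :=
  let G c g := EX4 c g P Q D (EAdd N (EC 2)) in
  ESub (EC 1) (ESub (EAdd (G c1 g1) (EC 1)) (G c2 g2)).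

Lemma defined_ECertify P Q D N v : defined P v -> defined Q v -> defined D v ->
  defined N v -> defined (ECertify P Q D N) v.
Proof. intros. simpl. tauto. Qed.

Lemma defined_ENegBit P Q D N v : defined P v -> defined Q v -> defined D v ->
  defined N v -> defined (ENegBit P Q D N) v.
Proof. intros. simpl. tauto. Qed.

End Certificates.

Lemma dyadic_limit (b : nat -> nat) :
  (forall j, b (S j) = (2 * b j)%nat \/ b (S j) = (2 * b j + 1)%nat) ->
  exists x, forall j, INR (b j) / 2 ^ j <= x <= INR (b j + 1) / 2 ^ j.
Proof.
  intros Hstep. set (u j := INR (b j) / 2 ^ j). set (w j := INR (b j + 1) / 2 ^ j).
  assert (Hmono : forall j, u j <= u (S j) /\ w (S j) <= w j).
  { intros j. unfold u, w. pose proof (pow2_pos j). pose proof (pos_INR (b j)).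
    assert (E : forall n, INR n / 2 ^ S j = INR n / 2 / 2 ^ j) by (intros; simpl; field; lra).
    rewrite !E. unfold Rdiv.
    destruct (Hstep j) as [-> | ->]; rewrite ?plus_INR, !mult_INR; simpl;
      split; apply Rmult_le_compat_r; try (left; apply Rinv_0_lt_compat; lra); lra. }
  assert (Huw : forall j, u j <= w j).
  { intros j. unfold u, w. rewrite plus_INR. pose proof (pow2_pos j).
    apply Rmult_le_compat_r; [left; apply Rinv_0_lt_compat|simpl]; lra. }
  assert (Hwdec : forall j n, (j <= n)%nat -> w n <= w j).
  { induction 1; [lra|]. pose proof (proj2 (Hmono m)). lra. }
  assert (Hub : has_ub u).
  { exists (w 0%nat). intros y [j ->].
    pose proof (Huw j). pose proof (Hwdec 0%nat j ltac:(lia)). lra. }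
  destruct (growing_cv u (fun j => proj1 (Hmono j)) Hub) as [x Hx].
  exists x. intros j. split.
  - apply (growing_ineq u x (fun j => proj1 (Hmono j)) Hx).
  - apply (lim_le u x (w j) j Hx). intros n Hn. pose proof (Huw n). pose proof (Hwdec j n Hn). lra.
Qed.

Lemma dyadic_computable (b : nat -> nat) x : comp1 b ->
  (forall j, INR (b j) / 2 ^ j <= x <= INR (b j + 1) / 2 ^ j) -> computable_real x.
Proof.
  intros Hb Hx. exists b, (fun _ => 0%nat), (fun j => 2 ^ j - 1)%nat. repeat split.
  - exact Hb.
  - apply (comp1_expr (EC 0)). simpl; auto.
  - apply (comp1_expr (ESub (EPow (EC 2) (EV 0)) (EC 1))). simpl; auto.
  - intros n. rewrite QR_dyadic. specialize (Hx n). rewrite plus_INR in Hx.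
    pose proof (pow2_pos n). rewrite half_inv.
    assert (INR (b n) / 2 ^ n + / 2 ^ n = (INR (b n) + INR 1) / 2 ^ n) by (simpl; field; lra).
    rabs.
Qed.

Lemma squeeze_zero f m x : modulus f m -> 0 <= x <= 1 ->
  (forall n, exists a b, 0 <= a <= 1 /\ 0 <= b <= 1 /\ Rabs (a - x) <= (/2) ^ (m n) /\
                          Rabs (b - x) <= (/2) ^ (m n) /\ f a <= 0 <= f b) ->
  f x = 0.
Proof.
  intros Hmod Hx H. apply zero_eps. intros n. destruct (H n) as [a [b [Ha [Hb [Hax [Hbx Hs]]]]]].
  pose proof (Hmod n a x Ha Hx Hax). pose proof (Hmod n b x Hb Hx Hbx). rabs.
Qed.

(* Effective bisection for a computable f with f 0 < 0 < f 1 and no zero at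
   rational points: the midpoint of the current interval is never a zero, so
   searching for a certificate of f there terminates and yields its sign. *)
Section Bisection.

Variables (f : R -> R) (g1 g2 g3 : nat -> nat -> nat -> nat -> nat).
Variables c1 c2 c3 : code.
Hypothesis Happ : forall p q d n, 0 <= QR p q d <= 1 ->
  Rabs (QR (g1 p q d n) (g2 p q d n) (g3 p q d n) - f (QR p q d)) <= (/2) ^ n.
Hypothesis Hc1 : forall a b d e, eval c1 [a; b; d; e] (g1 a b d e).
Hypothesis Hc2 : forall a b d e, eval c2 [a; b; d; e] (g2 a b d e).
Hypothesis Hc3 : forall a b d e, eval c3 [a; b; d; e] (g3 a b d e).
Hypothesis Hf0 : f 0 < 0.
Hypothesis Hf1 : 0 < f 1.
Hypothesis Hnz : forall p q d, 0 <= QR p q d <= 1 -> f (QR p q d) <> 0.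

(* The midpoint (2i+1)/2^(j+1) of [i/2^j, (i+1)/2^j], the precision at which f
   is certified there, and the bit telling that f is negative there. *)
Definition mid_search (i j : nat) : nat :=
  mu (certify g1 g2 g3 (2 * i + 1) 0 (2 ^ (j + 1) - 1)).
Definition mid_bit (i j : nat) : nat :=
  neg_bit g1 g2 (2 * i + 1) 0 (2 ^ (j + 1) - 1) (mid_search i j).

(* bisect j = i means that f changes sign on [i/2^j, (i+1)/2^j]. *)
Definition bisect : nat -> nat := prim_rec 0 (fun j i => 2 * i + mid_bit i j)%nat.

Lemma mid_in_unit i j : (i + 1 <= 2 ^ j)%nat -> 0 <= QR (2 * i + 1) 0 (2 ^ (j + 1) - 1) <= 1.
Proof.
  intros H. rewrite QR_nat by apply npow2_pos. apply ratio_unit; [|apply npow2_pos].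
  rewrite Nat.pow_add_r. simpl. lia.
Qed.

Lemma mid_certified i j : (i + 1 <= 2 ^ j)%nat ->
  exists N, certify g1 g2 g3 (2 * i + 1) 0 (2 ^ (j + 1) - 1) N = 0%nat.
Proof. intros H. apply (certify_exists f); auto using mid_in_unit. Qed.

Lemma mid_sign i j : (i + 1 <= 2 ^ j)%nat ->
  (mid_bit i j = 1%nat /\ f (INR (2 * i + 1) / 2 ^ S j) < 0) \/
  (mid_bit i j = 0%nat /\ 0 < f (INR (2 * i + 1) / 2 ^ S j)).
Proof.
  intros H. replace (S j) with (j + 1)%nat by lia. rewrite <- QR_dyadic.
  apply (certify_sign f g1 g2 g3); auto using mid_in_unit.
  apply mu_spec, mid_certified, H.
Qed.

Lemma bisect_invariant j : (bisect j + 1 <= 2 ^ j)%nat /\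
  f (INR (bisect j) / 2 ^ j) < 0 /\ 0 < f (INR (bisect j + 1) / 2 ^ j).
Proof.
  induction j as [|j [Hb [Hl Hr]]].
  - simpl. replace (0 / 1) with 0 by field. replace (1 / 1) with 1 by field. auto.
  - assert (E : forall n, INR n / 2 ^ j = INR (2 * n) / 2 ^ S j)
      by (intros; rewrite mult_INR; simpl; field; apply pow_nonzero; lra).
    change (bisect (S j)) with (2 * bisect j + mid_bit (bisect j) j)%nat.
    split; [simpl; destruct (mid_sign _ _ Hb) as [[-> _]|[-> _]]; lia|].
    destruct (mid_sign _ _ Hb) as [[-> Hm]|[-> Hm]]; rewrite ?Nat.add_0_r.
    + split; [exact Hm|]. rewrite E in Hr.
      now replace (2 * bisect j + 1 + 1)%nat with (2 * (bisect j + 1))%nat by lia.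
    + split; [rewrite <- E; exact Hl|exact Hm].
Qed.

Lemma bisect_step j : bisect (S j) = (2 * bisect j)%nat \/ bisect (S j) = (2 * bisect j + 1)%nat.
Proof.
  change (bisect (S j)) with (2 * bisect j + mid_bit (bisect j) j)%nat.
  destruct (mid_sign _ _ (proj1 (bisect_invariant j))) as [[-> _]|[-> _]]; lia.
Qed.

Lemma bisect_computable : comp1 bisect.
Proof.
  (* environment of the step: [j; i]; of the search: [N; j; i] *)
  set (Mid i := EAdd (EMul (EC 2) i) (EC 1)).
  set (Den j := ESub (EPow (EC 2) (EAdd j (EC 1))) (EC 1)).
  set (Search := EMu 2 (ECertify g1 g2 g3 c1 c2 c3 (Mid (EV 2)) (EC 0) (Den (EV 1)) (EV 0))).
  set (Step := EAdd (EMul (EC 2) (EV 1))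
                    (ENegBit g1 g2 c1 c2 (Mid (EV 1)) (EC 0) (Den (EV 0)) Search)).
  apply (comp1_expr (ERec 0 (EC 0) Step (EV 0))). intros a.
  split; [exact I|split; [|exact I]]. intros j _.
  change (defined Step [j; bisect j]).
  split; [simpl; tauto|]. apply defined_ENegBit; try (simpl; tauto).
  split; [apply (mid_certified _ _ (proj1 (bisect_invariant j)))|].
  intros N. apply defined_ECertify; simpl; tauto.
Qed.

End Bisection.

Lemma rational_computable p q d : computable_real (QR p q d).
Proof.
  exists (fun _ => p), (fun _ => q), (fun _ => d).
  repeat split; try (apply (comp1_expr (EC _)); simpl; auto).
  intros. rewrite Rminus_diag, Rabs_R0. left; apply half_pos.
Qed.

(* Intermediate value theorem for computable functions, with a computable
   zero: either f vanishes at a rational point, or bisection applies. *)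
Lemma computable_ivt f : computable_fun f -> f 0 < 0 -> 0 < f 1 ->
  exists x, computable_real x /\ 0 <= x <= 1 /\ f x = 0.
Proof.
  intros Hf H0 H1.
  destruct (classic (exists p q d, 0 <= QR p q d <= 1 /\ f (QR p q d) = 0))
    as [[p [q [d [Hr Hz]]]]|Hrat].
  { exists (QR p q d). auto using rational_computable. }
  assert (Hnz : forall p q d, 0 <= QR p q d <= 1 -> f (QR p q d) <> 0)
    by (intros p q d Hr Hz; apply Hrat; eauto).
  destruct Hf as [[m [_ Hmod]] [g1 [g2 [g3 [Hg1 [Hg2 [Hg3 Happ]]]]]]].
  destruct (comp4_code _ Hg1) as [c1 Hc1]. destruct (comp4_code _ Hg2) as [c2 Hc2].
  destruct (comp4_code _ Hg3) as [c3 Hc3].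
  set (b := bisect g1 g2 g3).
  pose proof (bisect_invariant f g1 g2 g3 Happ H0 H1 Hnz) as Hinv. fold b in Hinv.
  destruct (dyadic_limit b (bisect_step f g1 g2 g3 Happ H0 H1 Hnz)) as [x Hx].
  assert (Hx01 : 0 <= x <= 1) by (specialize (Hx 0%nat); simpl in Hx; lra).
  exists x. split; [|split; [exact Hx01|]].
  - exact (dyadic_computable b x
             (bisect_computable f g1 g2 g3 c1 c2 c3 Happ Hc1 Hc2 Hc3 H0 H1 Hnz) Hx).
  - apply (squeeze_zero f m x Hmod Hx01). intros n. set (j := m n).
    destruct (Hinv j) as [Hb [Hl Hr]]. specialize (Hx j). rewrite <- INR_pow2 in Hl, Hr, Hx.
    assert (Hw : INR (b j + 1) / INR (2 ^ j) - INR (b j) / INR (2 ^ j) = (/2) ^ j)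
      by (rewrite INR_pow2, plus_INR, half_inv; simpl; field; apply pow_nonzero; lra).
    exists (INR (b j) / INR (2 ^ j)), (INR (b j + 1) / INR (2 ^ j)).
    split; [apply ratio_unit; auto using npow2_pos; lia|].
    split; [apply ratio_unit; auto using npow2_pos|].
    split; [rabs|]. split; [rabs|lra].
Qed.

(* A computable surjection n |-> (iF n, kF n) of nat onto nat * nat, based on
   the integer square root: n = t*t + r with r <= 2t gives iF n = min r t and
   kF n = t - (r - t). *)
Definition isqrt n := mu (fun t => n + 1 - (t + 1) * (t + 1))%nat.
Definition sqrt_rest n := (n - isqrt n * isqrt n)%nat.
Definition iF n := (sqrt_rest n - (sqrt_rest n - isqrt n))%nat.
Definition kF n := (isqrt n - (sqrt_rest n - isqrt n))%nat.

Lemma isqrt_spec n t : (t * t <= n < (t + 1) * (t + 1))%nat -> isqrt n = t.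
Proof.
  intros [H1 H2]. assert (Ex : exists t, (n + 1 - (t + 1) * (t + 1) = 0)%nat) by (exists t; lia).
  destruct (mu_spec _ Ex) as [Hz Hmin]. unfold isqrt. set (s := mu _) in *.
  destruct (lt_eq_lt_dec s t) as [[L|L]|L]; auto; exfalso.
  - assert ((s + 1) * (s + 1) <= t * t)%nat by nia. lia.
  - apply (Hmin t L). lia.
Qed.

Lemma unpair_surj i k : exists n, iF n = i /\ kF n = k.
Proof.
  unfold iF, kF, sqrt_rest. destruct (le_lt_dec i k).
  - exists (k * k + i)%nat. rewrite (isqrt_spec _ k) by nia. lia.
  - exists (i * i + 2 * i - k)%nat. rewrite (isqrt_spec _ i) by nia. nia.
Qed.

Definition EIsqrt : expr :=
  EMu 1 (ESub (EAdd (EV 1) (EC 1)) (EMul (EAdd (EV 0) (EC 1)) (EAdd (EV 0) (EC 1)))).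
Definition ERest : expr := ESub (EV 0) (EMul EIsqrt EIsqrt).
Definition EiF : expr := ESub ERest (ESub ERest EIsqrt).
Definition EkF : expr := ESub EIsqrt (ESub ERest EIsqrt).

Lemma defined_EIsqrt n : defined EIsqrt [n].
Proof. split; [exists n; simpl; nia|intros; simpl; tauto]. Qed.

Lemma defined_EiF n : defined EiF [n].
Proof. pose proof (defined_EIsqrt n). simpl in *. tauto. Qed.

Lemma defined_EkF n : defined EkF [n].
Proof. pose proof (defined_EIsqrt n). simpl in *. tauto. Qed.

Lemma zero_set_closed f m : modulus f m ->
  closed_set (fun y => 0 <= y <= 1 /\ f y = 0).
Proof.
  intros Hmod x Hx. unfold complementary in Hx.
  destruct (Rlt_dec x 0) as [L|L].
  { exists (mkposreal (- x) ltac:(lra)). intros y Hy. unfold disc in Hy; simpl in Hy.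
    intros [[? ?] ?]. rabs. }
  destruct (Rlt_dec 1 x) as [L2|L2].
  { exists (mkposreal (x - 1) ltac:(lra)). intros y Hy. unfold disc in Hy; simpl in Hy.
    intros [[? ?] ?]. rabs. }
  assert (Hf : f x <> 0) by (intros E; apply Hx; split; [lra|auto]).
  destruct (half_small (Rabs (f x)) ltac:(apply Rabs_pos_lt; auto)) as [n Hn].
  exists (mkposreal ((/2) ^ (m n)) (half_pos _)). intros y Hy. unfold disc in Hy; simpl in Hy.
  intros [Hy01 Hfy]. assert (Rabs (f y - f x) <= (/2) ^ n) by (apply Hmod; try lra; rabs).
  rewrite Hfy in H. rabs.
Qed.

(* Enumerating the complement of the zero set of a computable f: the n-th
   interval is ((i-1)/W, (i+1)/W) with i = iF n and W = 2^m(kF n + 2), kept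
   only when i <= W and f is certified nonzero at i/W at precision kF n (the
   modulus then shows that f is nonzero on the whole interval); otherwise it
   is the empty interval (0,0). *)
Section ZeroSetComplement.

Variables (f : R -> R) (m : nat -> nat) (g1 g2 g3 : nat -> nat -> nat -> nat -> nat).
Hypothesis Hmod : modulus f m.
Hypothesis Happ : forall p q d n, 0 <= QR p q d <= 1 ->
  Rabs (QR (g1 p q d n) (g2 p q d n) (g3 p q d n) - f (QR p q d)) <= (/2) ^ n.

Definition grid (k : nat) : nat := 2 ^ m (k + 2).

Lemma grid_pos k : (0 < grid k)%nat.
Proof. apply npow2_pos. Qed.

Lemma grid_mesh k : / INR (grid k) = (/2) ^ m (k + 2).
Proof. unfold grid. rewrite INR_pow2, half_inv. reflexivity. Qed.

Lemma certified_neighbourhood i k y : (i <= grid k)%nat ->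
  certify g1 g2 g3 i 0 (grid k - 1) k = 0%nat -> 0 <= y <= 1 ->
  Rabs (INR i / INR (grid k) - y) <= / INR (grid k) -> f y <> 0.
Proof.
  intros Hi Hc Hy Hd. pose proof (ratio_unit i _ Hi (grid_pos k)) as Hc01.
  rewrite <- QR_nat in Hc01 by apply grid_pos.
  pose proof (certify_abs f g1 g2 g3 Happ _ _ _ _ Hc01 Hc) as Habs.
  rewrite QR_nat in Habs by apply grid_pos. rewrite QR_nat in Hc01 by apply grid_pos.
  rewrite grid_mesh in Hd. pose proof (Hmod (k + 2)%nat _ _ Hc01 Hy Hd) as Hm.
  rewrite half_plus2 in Hm. pose proof (half_pos k). intros Hz. rewrite Hz in Hm. rabs.
Qed.

Lemma nonzero_certified i k y : (i <= grid k)%nat -> 0 <= y <= 1 ->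
  4 * (/2) ^ k < Rabs (f y) -> Rabs (INR i / INR (grid k) - y) <= / INR (grid k) ->
  certify g1 g2 g3 i 0 (grid k - 1) k = 0%nat.
Proof.
  intros Hi Hy Hf Hd. pose proof (ratio_unit i _ Hi (grid_pos k)) as Hc01.
  rewrite grid_mesh in Hd. pose proof (Hmod (k + 2)%nat _ _ Hc01 Hy Hd) as Hm.
  rewrite half_plus2 in Hm. rewrite <- QR_nat in Hc01, Hm by apply grid_pos.
  apply (certify_complete f g1 g2 g3 Happ); auto. pose proof (half_pos k). rabs.
Qed.

Definition valid (n : nat) : nat :=
  ((1 - (iF n - grid (kF n))) * (1 - certify g1 g2 g3 (iF n) 0 (grid (kF n) - 1) (kF n)))%nat.

Definition left_end n := QR (iF n * valid n) (valid n) (grid (kF n) - 1).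
Definition right_end n := QR ((iF n + 1) * valid n) 0 (grid (kF n) - 1).

Lemma valid_cases n : valid n = 0%nat \/
  (valid n = 1%nat /\ (iF n <= grid (kF n))%nat /\
   certify g1 g2 g3 (iF n) 0 (grid (kF n) - 1) (kF n) = 0%nat).
Proof. unfold valid. nia. Qed.

Lemma ends_valid n : valid n = 1%nat ->
  left_end n = (INR (iF n) - 1) / INR (grid (kF n)) /\
  right_end n = (INR (iF n) + 1) / INR (grid (kF n)).
Proof.
  intros Hv. unfold left_end, right_end. rewrite Hv, !Nat.mul_1_r, !QR_nat by apply grid_pos.
  unfold QR. rewrite INR_pm1 by apply grid_pos. rewrite plus_INR. simpl. split; f_equal; lra.
Qed.

Lemma ends_invalid n : valid n = 0%nat -> left_end n = 0 /\ right_end n = 0.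
Proof. intros Hv. unfold left_end, right_end, QR. rewrite Hv, !Nat.mul_0_r. simpl. lra. Qed.

Lemma in_interval_dist i W y : (0 < W)%nat ->
  (INR i - 1) / INR W < y < (INR i + 1) / INR W -> Rabs (INR i / INR W - y) <= / INR W.
Proof.
  intros HW [H1 H2]. apply grid_dist; auto. apply lt_INR in HW. simpl in HW.
  apply Rmult_lt_compat_r with (r := INR W) in H1, H2; auto.
  unfold Rdiv in H1, H2. rewrite Rmult_assoc, Rinv_l in H1, H2 by lra. rabs.
Qed.

Lemma complement_enumerated y : 0 <= y <= 1 ->
  (f y <> 0 <-> exists n, left_end n < y < right_end n).
Proof.
  intros Hy. split.
  - intros Hfy. assert (Hq : 0 < Rabs (f y) / 4) by (pose proof (Rabs_pos_lt _ Hfy); lra).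
    destruct (half_small _ Hq) as [k Hk].
    destruct (floor_ex y (grid k) Hy (grid_pos k)) as [i [Hi Hfl]].
    destruct (unpair_surj i k) as [n [<- <-]]. exists n.
    assert (Hd : Rabs (INR (iF n) / INR (grid (kF n)) - y) <= / INR (grid (kF n)))
      by (apply grid_dist; [apply grid_pos|rabs]).
    assert (Hc := nonzero_certified _ _ _ Hi Hy ltac:(lra) Hd).
    destruct (valid_cases n) as [Hv|[Hv _]]; [unfold valid in Hv; rewrite Hc in Hv; nia|].
    destruct (ends_valid n Hv) as [-> ->]. pose proof (grid_pos (kF n)) as HW.
    apply lt_INR in HW. simpl in HW.
    split; apply Rmult_lt_reg_r with (INR (grid (kF n))); auto;
      unfold Rdiv; rewrite Rmult_assoc, Rinv_l; lra.
  - intros [n Hn]. destruct (valid_cases n) as [Hv|[Hv [Hi Hc]]].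
    + destruct (ends_invalid n Hv) as [E1 E2]. lra.
    + rewrite (proj1 (ends_valid n Hv)), (proj2 (ends_valid n Hv)) in Hn.
      apply (certified_neighbourhood _ _ _ Hi Hc Hy), in_interval_dist; auto using grid_pos.
Qed.

Variables (cm c1 c2 c3 : code).
Hypothesis Hcm : forall a, eval cm [a] (m a).
Hypothesis Hc1 : forall a b d e, eval c1 [a; b; d; e] (g1 a b d e).
Hypothesis Hc2 : forall a b d e, eval c2 [a; b; d; e] (g2 a b d e).
Hypothesis Hc3 : forall a b d e, eval c3 [a; b; d; e] (g3 a b d e).

Definition EGrid : expr := EPow (EC 2) (EX1 cm m (EAdd EkF (EC 2))).
Definition EValid : expr :=
  EMul (ESub (EC 1) (ESub EiF EGrid))
       (ESub (EC 1) (ECertify g1 g2 g3 c1 c2 c3 EiF (EC 0) (ESub EGrid (EC 1)) EkF)).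

Lemma defined_EGrid n : defined EGrid [n].
Proof.
  pose proof (defined_EkF n). split; [exact I|]. split; [exact Hcm|]. split; auto. exact I.
Qed.

Lemma defined_EValid n : defined EValid [n].
Proof.
  pose proof (defined_EiF n). pose proof (defined_EkF n). pose proof (defined_EGrid n).
  split; [split; [exact I|split; auto]|]. split; [exact I|].
  apply defined_ECertify; auto; [exact I|split; [auto|exact I]].
Qed.

End ZeroSetComplement.

Lemma zero_set_co_ce f : computable_fun f -> co_ce_closed (fun y => 0 <= y <= 1 /\ f y = 0).
Proof.
  intros [[m [Hm Hmod]] [g1 [g2 [g3 [Hg1 [Hg2 [Hg3 Happ]]]]]]].
  split; [intros x [H _]; exact H|]. split; [exact (zero_set_closed f m Hmod)|].
  destruct (comp1_code _ Hm) as [cm Hcm].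
  destruct (comp4_code _ Hg1) as [c1 Hc1]. destruct (comp4_code _ Hg2) as [c2 Hc2].
  destruct (comp4_code _ Hg3) as [c3 Hc3].
  pose proof (defined_EiF) as DI. pose proof (defined_EGrid m cm Hcm) as DG.
  pose proof (defined_EValid m g1 g2 g3 cm c1 c2 c3 Hcm Hc1 Hc2 Hc3) as DV.
  set (v := valid m g1 g2 g3). set (W n := (grid m (kF n) - 1)%nat).
  exists (fun n => iF n * v n)%nat, v, W, (fun n => (iF n + 1) * v n)%nat, (fun _ => 0%nat), W.
  split; [exact (comp1_expr (EMul EiF (EValid m g1 g2 g3 cm c1 c2 c3))
                            (fun n => conj (DI n) (DV n)))|].
  split; [exact (comp1_expr _ DV)|].
  split; [exact (comp1_expr (ESub (EGrid m cm) (EC 1)) (fun n => conj (DG n) I))|].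
  split; [exact (comp1_expr (EMul (EAdd EiF (EC 1)) (EValid m g1 g2 g3 cm c1 c2 c3))
                  (fun n => conj (conj (DI n) I) (DV n)))|].
  split; [exact (comp1_expr (EC 0) (fun _ => I))|].
  split; [exact (comp1_expr (ESub (EGrid m cm) (EC 1)) (fun n => conj (DG n) I))|].
  intros y Hy. pose proof (complement_enumerated f m g1 g2 g3 Hmod Happ y Hy) as Hc.
  unfold left_end, right_end in Hc. unfold v, W. tauto.
Qed.

Section Series.

Variable h : nat -> R -> R.
Hypothesis h_range : forall k y, 0 <= h k y <= 1.

Fixpoint psum (K : nat) (y : R) : R :=
  match K with 0 => 0 | S k => psum k y + (/2) ^ k * h k y end.

Lemma psum_bound y K : 0 <= psum K y <= 2 - 2 * (/2) ^ K.
Proof. induction K; simpl; [lra|]. pose proof (h_range K y). pose proof (half_pos K). nra. Qed.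

Lemma psum_tail y K j :
  0 <= psum (K + j) y - psum K y <= 2 * (/2) ^ K - 2 * (/2) ^ (K + j).
Proof.
  induction j as [|j IH]; [rewrite Nat.add_0_r; lra|].
  replace (K + S j)%nat with (S (K + j)) by lia. simpl.
  pose proof (h_range (K + j) y). pose proof (half_pos (K + j)). nra.
Qed.

Lemma psum_lip : (forall k y z, Rabs (h k y - h k z) <= Rabs (y - z)) ->
  forall y z K, Rabs (psum K y - psum K z) <= (2 - 2 * (/2) ^ K) * Rabs (y - z).
Proof.
  intros Hl y z K. induction K as [|K IH]; simpl; [rewrite Rminus_diag, Rabs_R0; lra|].
  pose proof (Hl K y z). pose proof (half_pos K). pose proof (Rabs_pos (y - z)).
  replace (psum K y + (/2) ^ K * h K y - (psum K z + (/2) ^ K * h K z))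
    with ((psum K y - psum K z) + (/2) ^ K * (h K y - h K z)) by ring.
  eapply Rle_trans; [apply Rabs_triang|].
  rewrite Rabs_mult, (Rabs_pos_eq ((/2) ^ K)) by lra. nra.
Qed.

Lemma series_exists : (forall k y z, Rabs (h k y - h k z) <= Rabs (y - z)) ->
  exists g : R -> R, (forall y K, psum K y <= g y <= psum K y + 2 * (/2) ^ K) /\
    (forall y z, Rabs (g y - g z) <= 2 * Rabs (y - z)).
Proof.
  intros Hl.
  assert (Hm : forall y, Un_growing (fun K => psum K y)).
  { intros y K. simpl. pose proof (h_range K y). pose proof (half_pos K). nra. }
  assert (Hb : forall y, has_ub (fun K => psum K y)).
  { intros y. exists 2. intros z [K ->].
    pose proof (psum_bound y K). pose proof (half_pos K). lra. }
  exists (fun y => proj1_sig (growing_cv _ (Hm y) (Hb y))).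
  assert (G : forall y K,
    psum K y <= proj1_sig (growing_cv _ (Hm y) (Hb y)) <= psum K y + 2 * (/2) ^ K).
  { intros y K. destruct (growing_cv _ (Hm y) (Hb y)) as [l Hlim]. simpl. split.
    - apply (growing_ineq _ _ (Hm y) Hlim).
    - apply (lim_le _ l _ K Hlim). intros n Hn. replace n with (K + (n - K))%nat by lia.
      pose proof (psum_tail y K (n - K)). pose proof (half_pos (K + (n - K))). lra. }
  split; auto. intros y z.
  apply (le_eps _ _ 4). intros K. pose proof (G y K). pose proof (G z K).
  pose proof (psum_lip Hl y z K). pose proof (half_pos K). pose proof (Rabs_pos (y - z)).
  assert ((2 - 2 * (/2) ^ K) * Rabs (y - z) <= 2 * Rabs (y - z)) by nra.
  set (gy := proj1_sig _) in *. set (gz := proj1_sig _) in *. rabs.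
Qed.

Lemma series_zero g y : (forall K, psum K y <= g y <= psum K y + 2 * (/2) ^ K) ->
  (g y = 0 <-> forall k, h k y = 0).
Proof.
  intros Hg. split.
  - intros E k. destruct (h_range k y) as [[L|L] _]; auto. exfalso.
    pose proof (Hg (S k)) as [G _]. simpl in G.
    pose proof (psum_bound y k). pose proof (half_pos k).
    assert (0 < (/2) ^ k * h k y) by (apply Rmult_lt_0_compat; auto). lra.
  - intros Z.
    assert (P0 : forall K, psum K y = 0) by (induction K; simpl; auto; rewrite IHK, Z; ring).
    apply zero_eps. intros K. pose proof (Hg (K + 1)%nat) as HK. rewrite P0, half_add in HK.
    simpl in HK. rewrite Rabs_pos_eq; lra.
Qed.

End Series.

Definition nmin (a b : nat) : nat := (a - (a - b))%nat.
Definition floor_scaled (P Q Y K : nat) : nat := ((2 ^ K * P - 2 ^ K * Q) / Y)%nat.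

Lemma INR_nmin a b : INR (nmin a b) = Rmin (INR a) (INR b).
Proof.
  unfold nmin. destruct (le_lt_dec a b) as [L|L];
    [replace (a - (a - b))%nat with a by lia|replace (a - (a - b))%nat with b by lia];
    [apply le_INR in L|apply lt_INR in L]; unfold Rmin; destruct Rle_dec; lra.
Qed.

Lemma floor_scaled_spec P Q Y K : (0 < Y)%nat ->
  INR (floor_scaled P Q Y K) <= 2 ^ K * Rmax 0 ((INR P - INR Q) / INR Y)
    < INR (floor_scaled P Q Y K) + 1.
Proof.
  intros HY. unfold floor_scaled. pose proof (INR_div (2 ^ K * P - 2 ^ K * Q) Y HY) as D.
  enough (E : INR (2 ^ K * P - 2 ^ K * Q) / INR Y = 2 ^ K * Rmax 0 ((INR P - INR Q) / INR Y))
    by (rewrite E in D; exact D).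
  rewrite INR_sub, !mult_INR, INR_pow2. pose proof (pow2_pos K). apply lt_INR in HY. simpl in HY.
  unfold Rmax. destruct (Rle_dec 0 (2 ^ K * INR P - 2 ^ K * INR Q)) as [L1|L1];
    destruct (Rle_dec 0 ((INR P - INR Q) / INR Y)) as [L2|L2].
  - field. lra.
  - exfalso. apply L2. apply Rmult_le_pos; [nra|left; apply Rinv_0_lt_compat; lra].
  - exfalso. apply L1. enough (0 <= INR P - INR Q) by nra.
    apply Rmult_le_reg_r with (/ INR Y); [apply Rinv_0_lt_compat; lra|].
    rewrite Rmult_0_l. exact L2.
  - unfold Rdiv. ring.
Qed.

Lemma QR_diff p q d a b c :
  (INR (p * (c + 1) + b * (d + 1)) - INR (q * (c + 1) + a * (d + 1))) / INR ((d + 1) * (c + 1))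
  = QR p q d - QR a b c.
Proof.
  unfold QR. rewrite !plus_INR, !mult_INR, !plus_INR. change (INR 1) with 1.
  pose proof (pos_INR c). pose proof (pos_INR d). field. lra.
Qed.

Lemma Rmin_floor a A b B : a - 1 < A <= a -> b - 1 < B <= b -> Rmin a b - 1 < Rmin A B <= Rmin a b.
Proof. intros. unfold Rmin. repeat destruct Rle_dec; lra. Qed.

Lemma Rmin_scale c a b : 0 < c -> c * Rmin a b = Rmin (c * a) (c * b).
Proof. intros. unfold Rmin. repeat destruct Rle_dec; try lra; nra. Qed.

Section Tents.

Variables a1 a2 a3 b1 b2 b3 : nat -> nat.

Definition lo k := QR (a1 k) (a2 k) (a3 k).
Definition hi k := QR (b1 k) (b2 k) (b3 k).

Definition tent (k : nat) (y : R) : R := Rmin (Rmin (Rmax 0 (y - lo k)) (Rmax 0 (hi k - y))) 1.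

Lemma tent_range k y : 0 <= tent k y <= 1.
Proof. unfold tent, Rmin, Rmax. repeat destruct Rle_dec; lra. Qed.

Lemma tent_lip k y z : Rabs (tent k y - tent k z) <= Rabs (y - z).
Proof.
  unfold tent. apply Rmin_lip; [|rewrite Rminus_diag, Rabs_R0; apply Rabs_pos].
  apply Rmin_lip; apply Rmax_lip; try (rewrite Rminus_diag, Rabs_R0; apply Rabs_pos); rabs.
Qed.

Lemma tent_pos k y : 0 < tent k y <-> lo k < y < hi k.
Proof. unfold tent, Rmin, Rmax. repeat destruct Rle_dec; lra. Qed.

Definition tent_nat (k p q d K : nat) : nat :=
  nmin (nmin (floor_scaled (p * (a3 k + 1) + a2 k * (d + 1)) (q * (a3 k + 1) + a1 k * (d + 1))
                           ((d + 1) * (a3 k + 1)) K)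
             (floor_scaled (b1 k * (d + 1) + q * (b3 k + 1)) (b2 k * (d + 1) + p * (b3 k + 1))
                           ((b3 k + 1) * (d + 1)) K))
       (2 ^ K).

Lemma tent_nat_spec k p q d K :
  2 ^ K * tent k (QR p q d) - 1 < INR (tent_nat k p q d K) <= 2 ^ K * tent k (QR p q d).
Proof.
  unfold tent_nat, tent. rewrite !INR_nmin, INR_pow2. pose proof (pow2_pos K).
  rewrite !Rmin_scale by auto. rewrite Rmult_1_r.
  apply Rmin_floor; [|lra]. apply Rmin_floor.
  - pose proof (floor_scaled_spec (p * (a3 k + 1) + a2 k * (d + 1))
                  (q * (a3 k + 1) + a1 k * (d + 1)) ((d + 1) * (a3 k + 1)) K ltac:(lia)) as F.
    rewrite QR_diff in F. unfold lo. lra.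
  - pose proof (floor_scaled_spec (b1 k * (d + 1) + q * (b3 k + 1))
                  (b2 k * (d + 1) + p * (b3 k + 1)) ((b3 k + 1) * (d + 1)) K ltac:(lia)) as F.
    rewrite QR_diff in F. unfold hi. lra.
Qed.

Definition tent_sum_nat (p q d K : nat) : nat :=
  prim_rec 0 (fun k s => s + tent_nat k p q d K * 2 ^ (K - k))%nat K.

Lemma pow_sub_INR K j : (j <= K)%nat -> INR (2 ^ (K - j)) = 2 ^ K * (/2) ^ j.
Proof.
  intros H. rewrite INR_pow2.
  assert (E : 2 ^ K = 2 ^ (K - j) * 2 ^ j) by (rewrite <- pow_add; f_equal; lia).
  rewrite E, Rmult_assoc, (Rmult_comm (2 ^ j)), half_mul. ring.
Qed.

Lemma tent_sum_nat_partial p q d K N : (N <= K)%nat ->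
  2 ^ K * 2 ^ K * psum tent N (QR p q d) - 2 * 2 ^ K * (1 - (/2) ^ N)
   <= INR (prim_rec 0 (fun k s => s + tent_nat k p q d K * 2 ^ (K - k))%nat N)
   <= 2 ^ K * 2 ^ K * psum tent N (QR p q d).
Proof.
  intros HN. induction N as [|N IH]; simpl; [lra|].
  rewrite plus_INR, mult_INR, pow_sub_INR by lia.
  pose proof (tent_nat_spec N p q d K). pose proof (half_pos N). pose proof (pow2_pos K).
  destruct (IH ltac:(lia)) as [I1 I2].
  set (t := tent N (QR p q d)) in *. set (F := INR (tent_nat N p q d K)) in *.
  assert (C : 0 < 2 ^ K * (/2) ^ N) by (apply Rmult_lt_0_compat; auto).
  assert (F * (2 ^ K * (/2) ^ N) <= 2 ^ K * t * (2 ^ K * (/2) ^ N))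
    by (apply Rmult_le_compat_r; lra).
  assert ((2 ^ K * t - 1) * (2 ^ K * (/2) ^ N) <= F * (2 ^ K * (/2) ^ N))
    by (apply Rmult_le_compat_r; lra).
  split; nra.
Qed.

Lemma tent_sum_nat_spec p q d K :
  psum tent K (QR p q d) - 2 * (/2) ^ K <= INR (tent_sum_nat p q d K) * ((/2) ^ K * (/2) ^ K)
    <= psum tent K (QR p q d).
Proof.
  destruct (tent_sum_nat_partial p q d K K (le_n _)) as [S1 S2].
  fold (tent_sum_nat p q d K) in S1, S2.
  pose proof (half_mul K) as HM. pose proof (half_pos K). pose proof (pow2_pos K).
  set (e := (/2) ^ K) in *. set (W := 2 ^ K) in *. set (S := INR (tent_sum_nat p q d K)) in *.
  assert (E : e * e * (W * W) = 1)
    by (replace (e * e * (W * W)) with ((e * W) * (e * W)) by ring; rewrite HM; ring).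
  split.
  - apply Rmult_le_compat_r with (r := e * e) in S1; [|nra].
    replace ((W * W * psum tent K (QR p q d) - 2 * W * (1 - e)) * (e * e))
      with (psum tent K (QR p q d) * (e * e * (W * W)) - 2 * (e * W) * e * (1 - e)) in S1 by ring.
    rewrite E, HM in S1. nra.
  - apply Rmult_le_compat_r with (r := e * e) in S2; [|nra].
    replace (W * W * psum tent K (QR p q d) * (e * e))
      with (psum tent K (QR p q d) * (e * e * (W * W))) in S2 by ring.
    rewrite E in S2. lra.
Qed.

End Tents.

Lemma QR_combine p q d px qx dx S W : (0 < W)%nat ->
  QR ((p * (dx + 1) + qx * (d + 1)) * S) ((px * (d + 1) + q * (dx + 1)) * S)
     ((d + 1) * (dx + 1) * (W * W) - 1)
   = (QR p q d - QR px qx dx) * (INR S / (INR W * INR W)).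
Proof.
  intros HW. unfold QR. rewrite INR_pm1 by nia. repeat rewrite ?mult_INR, ?plus_INR.
  change (INR 1) with 1. pose proof (pos_INR d). pose proof (pos_INR dx).
  apply lt_INR in HW. simpl in HW. field. split; lra.
Qed.

Lemma product_error r x x' s gr e :
  Rabs (r - x) <= 1 -> Rabs (x' - x) <= e -> Rabs (s - gr) <= 4 * e -> 0 <= s <= 2 ->
  Rabs ((r - x') * s - (r - x) * gr) <= 8 * e.
Proof.
  intros H1 H2 H3 H4.
  replace ((r - x') * s - (r - x) * gr) with ((x - x') * s + (r - x) * (s - gr)) by ring.
  eapply Rle_trans; [apply Rabs_triang|]. rewrite !Rabs_mult, (Rabs_pos_eq s) by lra.
  rewrite Rabs_minus_sym in H2. pose proof (Rabs_pos (x - x')). pose proof (Rabs_pos (r - x)).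
  pose proof (Rabs_pos (s - gr)). nra.
Qed.

Section Construction.

Variables (B : R -> Prop) (x : R) (a1 a2 a3 b1 b2 b3 px qx dx : nat -> nat) (g : R -> R).
Hypothesis HB : forall y, B y -> 0 < y < 1.
Hypothesis Hen : forall y, 0 <= y <= 1 ->
  (~ B y <-> exists n, lo a1 a2 a3 n < y < hi b1 b2 b3 n).
Hypothesis Hx01 : 0 < x < 1.
Hypothesis Hx : forall n, Rabs (QR (px n) (qx n) (dx n) - x) <= (/2) ^ n.
Hypothesis Hg : forall y K, psum (tent a1 a2 a3 b1 b2 b3) K y <= g y <=
                            psum (tent a1 a2 a3 b1 b2 b3) K y + 2 * (/2) ^ K.
Hypothesis Hglip : forall y z, Rabs (g y - g z) <= 2 * Rabs (y - z).

Definition fB (y : R) : R := (y - x) * g y.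

Lemma g_range y : 0 <= g y <= 2.
Proof. pose proof (Hg y 0%nat). simpl in *. lra. Qed.

Lemma g_zero y : 0 <= y <= 1 -> (g y = 0 <-> B y).
Proof.
  intros Hy. rewrite (series_zero _ (tent_range a1 a2 a3 b1 b2 b3) g y (Hg y)). split.
  - intros Hz. apply NNPP. intros Hn. destruct (proj1 (Hen y Hy) Hn) as [k Hk].
    apply tent_pos in Hk. rewrite Hz in Hk. lra.
  - intros Hb k. destruct (tent_range a1 a2 a3 b1 b2 b3 k y) as [[L|L] _]; auto.
    exfalso. apply tent_pos in L. apply (proj2 (Hen y Hy)); eauto.
Qed.

Lemma fB_zero_set y : (0 <= y <= 1 /\ fB y = 0) <-> (B y \/ y = x).
Proof.
  unfold fB. split.
  - intros [Hy E]. apply Rmult_integral in E. destruct E as [E|E]; [right; lra|left].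
    apply g_zero; auto.
  - intros [Hb| ->]; [|split; [lra|ring]]. pose proof (HB y Hb).
    split; [lra|]. rewrite (proj2 (g_zero y ltac:(lra)) Hb). ring.
Qed.

Lemma fB_sign : fB 0 * fB 1 < 0.
Proof.
  assert (G : forall y, 0 <= y <= 1 -> ~ B y -> 0 < g y).
  { intros y Hy Hn. destruct (g_range y) as [[L|L] _]; auto. symmetry in L.
    apply g_zero in L; tauto. }
  assert (0 < g 0) by (apply G; [lra|intros Hb; apply HB in Hb; lra]).
  assert (0 < g 1) by (apply G; [lra|intros Hb; apply HB in Hb; lra]).
  unfold fB. assert (0 < x * g 0) by (apply Rmult_lt_0_compat; lra).
  assert (0 < (1 - x) * g 1) by (apply Rmult_lt_0_compat; lra). nra.
Qed.

(* fB is 4-Lipschitz on [0,1]. *)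
Lemma fB_modulus : modulus fB (fun n => n + 2)%nat.
Proof.
  intros n y z Hy Hz Hyz. unfold fB. rewrite half_plus2 in Hyz.
  replace ((y - x) * g y - (z - x) * g z) with ((y - z) * g y + (z - x) * (g y - g z)) by ring.
  eapply Rle_trans; [apply Rabs_triang|]. rewrite !Rabs_mult.
  pose proof (Hglip y z). pose proof (g_range y). pose proof (Rabs_pos (y - z)).
  pose proof (Rabs_pos (g y - g z)). assert (Rabs (z - x) <= 1) by rabs.
  rewrite (Rabs_pos_eq (g y)) by lra. nra.
Qed.

(* The approximation of fB at QR p q d to precision n: (QR p q d - x_K) s with
   K = n + 3, x_K the K-th approximation of x and s = 4^-K tent_sum_nat p q d K. *)
Definition fB_approx1 p q d n :=
  let K := (n + 3)%nat in
  ((p * (dx K + 1) + qx K * (d + 1)) * tent_sum_nat a1 a2 a3 b1 b2 b3 p q d K)%nat.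
Definition fB_approx2 p q d n :=
  let K := (n + 3)%nat in
  ((px K * (d + 1) + q * (dx K + 1)) * tent_sum_nat a1 a2 a3 b1 b2 b3 p q d K)%nat.
Definition fB_approx3 (p q d n : nat) :=
  let K := (n + 3)%nat in ((d + 1) * (dx K + 1) * (2 ^ K * 2 ^ K) - 1)%nat.

Lemma fB_approx p q d n : 0 <= QR p q d <= 1 ->
  Rabs (QR (fB_approx1 p q d n) (fB_approx2 p q d n) (fB_approx3 p q d n) - fB (QR p q d))
    <= (/2) ^ n.
Proof.
  intros Hr. unfold fB_approx1, fB_approx2, fB_approx3, fB.
  set (K := (n + 3)%nat). rewrite QR_combine, INR_pow2 by apply npow2_pos.
  pose proof (tent_sum_nat_spec a1 a2 a3 b1 b2 b3 p q d K) as HS.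
  pose proof (Hg (QR p q d) K).
  pose proof (psum_bound _ (tent_range a1 a2 a3 b1 b2 b3) (QR p q d) K).
  pose proof (half_pos K). pose proof (pow2_pos K).
  replace (INR (tent_sum_nat a1 a2 a3 b1 b2 b3 p q d K) / (2 ^ K * 2 ^ K))
    with (INR (tent_sum_nat a1 a2 a3 b1 b2 b3 p q d K) * ((/2) ^ K * (/2) ^ K))
    by (rewrite half_inv; field; lra).
  replace ((/2) ^ n) with (8 * (/2) ^ K) by (unfold K; rewrite half_add; simpl; field).
  apply product_error; [rabs|apply Hx|rabs|].
  split; [apply Rmult_le_pos; [apply pos_INR|nra]|lra].
Qed.

Variables ca1 ca2 ca3 cb1 cb2 cb3 cpx cqx cdx : code.
Hypothesis Ha1 : forall a, eval ca1 [a] (a1 a).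
Hypothesis Ha2 : forall a, eval ca2 [a] (a2 a).
Hypothesis Ha3 : forall a, eval ca3 [a] (a3 a).
Hypothesis Hb1 : forall a, eval cb1 [a] (b1 a).
Hypothesis Hb2 : forall a, eval cb2 [a] (b2 a).
Hypothesis Hb3 : forall a, eval cb3 [a] (b3 a).
Hypothesis Hpx : forall a, eval cpx [a] (px a).
Hypothesis Hqx : forall a, eval cqx [a] (qx a).
Hypothesis Hdx : forall a, eval cdx [a] (dx a).

Definition EFloorScaled (P Q Y K : expr) : expr :=
  EDiv (ESub (EMul (EPow (EC 2) K) P) (EMul (EPow (EC 2) K) Q)) Y.
Definition ENmin (a b : expr) : expr := ESub a (ESub a b).

Definition ETentNat (J P Q D K : expr) : expr :=
  let A1 := EX1 ca1 a1 J in let A2 := EX1 ca2 a2 J in let A3 := EX1 ca3 a3 J in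
  let B1 := EX1 cb1 b1 J in let B2 := EX1 cb2 b2 J in let B3 := EX1 cb3 b3 J in
  let D1 := EAdd D (EC 1) in
  ENmin (ENmin (EFloorScaled (EAdd (EMul P (EAdd A3 (EC 1))) (EMul A2 D1))
                             (EAdd (EMul Q (EAdd A3 (EC 1))) (EMul A1 D1))
                             (EMul D1 (EAdd A3 (EC 1))) K)
               (EFloorScaled (EAdd (EMul B1 D1) (EMul Q (EAdd B3 (EC 1))))
                             (EAdd (EMul B2 D1) (EMul P (EAdd B3 (EC 1))))
                             (EMul (EAdd B3 (EC 1)) D1) K))
        (EPow (EC 2) K).

Lemma defined_ETentNat J P Q D K v : defined J v -> defined P v -> defined Q v ->
  defined D v -> defined K v -> defined (ETentNat J P Q D K) v.
Proof. intros. simpl. repeat split; auto; simpl; nia. Qed.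

(* Environment [p; q; d; n]; the recursion step sees [k; s; p; q; d; n]. *)
Definition ESumNat : expr :=
  let K6 := EAdd (EV 5) (EC 3) in
  ERec 4 (EC 0)
    (EAdd (EV 1) (EMul (ETentNat (EV 0) (EV 2) (EV 3) (EV 4) K6) (EPow (EC 2) (ESub K6 (EV 0)))))
    (EAdd (EV 3) (EC 3)).

Lemma defined_ESumNat p q d n : defined ESumNat [p; q; d; n].
Proof.
  split; [exact I|]. split; [|split; exact I]. intros k _.
  split; [exact I|]. split; [apply defined_ETentNat; simpl; auto|split; simpl; auto].
Qed.

Lemma fB_approx_computable :
  comp4 fB_approx1 /\ comp4 fB_approx2 /\ comp4 fB_approx3.
Proof.
  set (K := EAdd (EV 3) (EC 3)).
  set (PX := EX1 cpx px K). set (QX := EX1 cqx qx K). set (DX := EX1 cdx dx K).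
  split; [|split].
  - apply (comp4_expr (EMul (EAdd (EMul (EV 0) (EAdd DX (EC 1))) (EMul QX (EAdd (EV 2) (EC 1))))
                            ESumNat)).
    intros. split; [simpl; tauto|apply defined_ESumNat].
  - apply (comp4_expr (EMul (EAdd (EMul PX (EAdd (EV 2) (EC 1))) (EMul (EV 1) (EAdd DX (EC 1))))
                            ESumNat)).
    intros. split; [simpl; tauto|apply defined_ESumNat].
  - apply (comp4_expr (ESub (EMul (EMul (EAdd (EV 2) (EC 1)) (EAdd DX (EC 1)))
                                  (EMul (EPow (EC 2) K) (EPow (EC 2) K))) (EC 1))).
    intros. simpl. tauto.
Qed.

Lemma fB_computable : computable_fun fB.
Proof.
  split.
  - exists (fun n => n + 2)%nat. split; [apply (comp1_expr (EAdd (EV 0) (EC 2))); simpl; auto|].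
    exact fB_modulus.
  - destruct fB_approx_computable as [H1 [H2 H3]].
    exists fB_approx1, fB_approx2, fB_approx3. split; [|split; [|split]]; auto.
    exact fB_approx.
Qed.

End Construction.

(* Computable functions are closed under negation (to reduce to f 0 < 0). *)
Lemma computable_fun_opp f : computable_fun f -> computable_fun (fun y => - f y).
Proof.
  intros [[m [Hm Hmod]] [g1 [g2 [g3 [H1 [H2 [H3 Happ]]]]]]]. split.
  - exists m. split; auto. intros n y z Hy Hz Hyz.
    replace (- f y - - f z) with (- (f y - f z)) by ring. rewrite Rabs_Ropp. auto.
  - exists g2, g1, g3. repeat split; auto. intros p q d n Hr. rewrite QR_neg.
    replace (- QR (g1 p q d n) (g2 p q d n) (g3 p q d n) - - f (QR p q d))
      with (- (QR (g1 p q d n) (g2 p q d n) (g3 p q d n) - f (QR p q d))) by ring.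
    rewrite Rabs_Ropp. auto.
Qed.

Lemma zero_set_of_sign_change (A : R -> Prop) (HA : forall x, A x -> 0 < x < 1) :
  (exists f : R -> R, computable_fun f /\ f 0 * f 1 < 0 /\
     forall x, A x <-> (0 <= x <= 1 /\ f x = 0)) ->
  co_ce_closed A /\ exists x, computable_real x /\ 0 < x < 1 /\ A x.
Proof.
  intros [f [Hf [Hs Hz]]].
  assert (EA : A = (fun y => 0 <= y <= 1 /\ f y = 0))
    by (apply functional_extensionality; intros y; apply propositional_extensionality; auto).
  split; [rewrite EA; apply zero_set_co_ce, Hf|].
  assert (Hroot : exists x, computable_real x /\ 0 <= x <= 1 /\ f x = 0).
  { destruct (Rlt_dec (f 0) 0) as [L|L].
    - apply computable_ivt; [exact Hf|exact L|nra].
    - assert (f 0 <> 0) by (intros E; rewrite E in Hs; lra).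
      assert (0 < f 0 /\ f 1 < 0) by (split; nra).
      destruct (computable_ivt (fun y => - f y)) as [x [Hc [H01 Hx]]];
        [apply computable_fun_opp, Hf|lra|lra|].
      exists x. repeat split; auto; lra. }
  destruct Hroot as [x [Hc [H01 Hx]]]. exists x.
  assert (A x) by (apply Hz; auto). auto.
Qed.

Lemma co_ce_with_point_is_union (A : R -> Prop) (HA : forall x, A x -> 0 < x < 1) :
  (co_ce_closed A /\ exists x, computable_real x /\ 0 < x < 1 /\ A x) ->
  exists (B : R -> Prop) (x : R), (forall y, B y -> 0 < y < 1) /\
    co_ce_closed B /\ computable_real x /\ 0 < x < 1 /\ forall y, A y <-> (B y \/ y = x).
Proof.
  intros [Hc [x [Hx [H01 Ax]]]]. exists A, x.
  do 4 (split; [assumption|]). intros y. split; [auto|intros [Hy| ->]; auto].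
Qed.

Lemma union_is_zero_set (A : R -> Prop) :
  (exists (B : R -> Prop) (x : R), (forall y, B y -> 0 < y < 1) /\
     co_ce_closed B /\ computable_real x /\ 0 < x < 1 /\ forall y, A y <-> (B y \/ y = x)) ->
  exists f : R -> R, computable_fun f /\ f 0 * f 1 < 0 /\
    forall x, A x <-> (0 <= x <= 1 /\ f x = 0).
Proof.
  intros [B [x [HB [[_ [_ [a1 [a2 [a3 [b1 [b2 [b3 [Ha1 [Ha2 [Ha3 [Hb1 [Hb2 [Hb3 Hen]]]]]]]]]]]]]]
                       [[px [qx [dx [Hpx [Hqx [Hdx Hx]]]]]] [Hx01 HA]]]]]].
  destruct (series_exists _ (tent_range a1 a2 a3 b1 b2 b3) (tent_lip a1 a2 a3 b1 b2 b3))
    as [g [Hg Hglip]].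
  destruct (comp1_code _ Ha1) as [ca1 Hca1]. destruct (comp1_code _ Ha2) as [ca2 Hca2].
  destruct (comp1_code _ Ha3) as [ca3 Hca3]. destruct (comp1_code _ Hb1) as [cb1 Hcb1].
  destruct (comp1_code _ Hb2) as [cb2 Hcb2]. destruct (comp1_code _ Hb3) as [cb3 Hcb3].
  destruct (comp1_code _ Hpx) as [cpx Hcpx]. destruct (comp1_code _ Hqx) as [cqx Hcqx].
  destruct (comp1_code _ Hdx) as [cdx Hcdx].
  exists (fB x g). split; [|split].
  - exact (fB_computable x a1 a2 a3 b1 b2 b3 px qx dx g Hx01 Hx Hg Hglip
             ca1 ca2 ca3 cb1 cb2 cb3 cpx cqx cdx Hca1 Hca2 Hca3 Hcb1 Hcb2 Hcb3 Hcpx Hcqx Hcdx).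
  - exact (fB_sign B x a1 a2 a3 b1 b2 b3 g HB Hen Hx01 Hg).
  - intros y. rewrite HA, (fB_zero_set B x a1 a2 a3 b1 b2 b3 g HB Hen Hx01 Hg). tauto.
Qed.

Theorem proposition6p3 (A : R -> Prop)
  (HA : forall x, A x -> 0 < x < 1) (Hne : exists x, A x) :
  ((exists f : R -> R, computable_fun f /\ f 0 * f 1 < 0 /\
      forall x, A x <-> (0 <= x <= 1 /\ f x = 0))
   <->
   (exists (B : R -> Prop) (x : R), (forall y, B y -> 0 < y < 1) /\
      co_ce_closed B /\ computable_real x /\ 0 < x < 1 /\
      forall y, A y <-> (B y \/ y = x)))
  /\
  ((exists (B : R -> Prop) (x : R), (forall y, B y -> 0 < y < 1) /\
      co_ce_closed B /\ computable_real x /\ 0 < x < 1 /\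
      forall y, A y <-> (B y \/ y = x))
   <->
   (co_ce_closed A /\ exists x, computable_real x /\ 0 < x < 1 /\ A x)).
Proof.
  pose proof (zero_set_of_sign_change A HA) as H13.
  pose proof (co_ce_with_point_is_union A HA) as H32.
  pose proof (union_is_zero_set A) as H21.
  tauto.
Qed.
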